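(* There exists a $(39,3)$-arc in $\operatorname{PG}(2,25)$; hence $m_3(2,25)\ge 39$.
   Context: Points of $\operatorname{PG}(2,q)$ are the 1-dimensional subspaces of $\operatorname{GF}(q)^3$, lines are the 2-dimensional subspaces. An $(n,r)$-arc in $\operatorname{PG}(2,q)$ is a set $\mathcal B$ of $n$ points such that every line contains at most $r$ points of $\mathcal B$ and at least one line contains exactly $r$ points of $\mathcal B$. $m_r(2,q)$ is the maximum $n$ for which an $(n,r)$-arc in $\operatorname{PG}(2,q)$ exists. *)

From mathcomp Require Import all_boot all_order all_algebra.
Set Implicit Arguments. Unset Strict Implicit. Unset Printing Implicit Defensive.
Import GRing.Theory.
Local Open Scope ring_scope.

(* A subspace of F^3 (row vectors 'rV[F]_3)
   is represented canonically by the square matrix <<A>>%MS whose row space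
   it is: the map  U |-> <<U>>%MS  is a bijection between subspaces of
   F^3 and matrices A : 'M[F]_3 with <<A>>%MS = A. *)
Section PG2.
Variable F : finFieldType.

Definition pg_point (A : 'M[F]_3) : bool := (\rank A == 1%N) && (<<A>>%MS == A).
Definition pg_line (A : 'M[F]_3) : bool := (\rank A == 2%N) && (<<A>>%MS == A).

Definition on_line (B : {set 'M[F]_3}) (L : 'M[F]_3) : {set 'M[F]_3} :=
  [set P in B | (P <= L)%MS].

Definition is_r_arc (r : nat) (B : {set 'M[F]_3}) : bool :=
  [&& [forall P in B, pg_point P],
      [forall L, pg_line L ==> (#|on_line B L| <= r)%N] &
      [exists L, pg_line L && (#|on_line B L| == r)]].

Definition is_arc (n r : nat) (B : {set 'M[F]_3}) : bool :=
  is_r_arc r B && (#|B| == n).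

Definition m_r (r : nat) : nat := \max_(B : {set 'M[F]_3} | is_r_arc r B) #|B|.

End PG2.

From mathcomp Require Import all_boot all_order all_algebra.
From mathcomp Require Import all_field ring zify.
Set Implicit Arguments. Unset Strict Implicit. Unset Printing Implicit Defensive.
Import GRing.Theory.

(* The arc is an explicit table of 39 points whose coordinates lie in
   GF(25) = GF(5)[i]/(i^2 - 2); the table entry 5b + a stands for a + b i.
   The development has three layers.
   1. Linear algebra of three rows u, v, w of F^3: if det(u,v,w) <> 0, no
      subspace of dimension <= 2 contains all three; if det(u,v,w) = 0 and
      u, v are independent, then w lies in the span of u and v.
   2. Arcs from vectors: let v_1, ..., v_n in F^3 be such that any two
      distinct indices a, b have some c with det(v_a,v_b,v_c) <> 0, at most r
      indices c with det(v_a,v_b,v_c) = 0, and some pair has exactly r.  Then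
      the points <v_k> form an (n,r)-arc: the only line through <v_a> and
      <v_b> is <v_a, v_b>, and it contains exactly the <v_c> with vanishing
      determinant.
   3. Computation: these conditions are checked by evaluation in a model of
      GF(25) on pairs of naturals, which embeds into any field with 25
      elements by sending i to a square root of 2.  The embedding is a ring
      morphism vanishing only at 0, so it preserves the vanishing of the
      determinants. *)

Local Open Scope ring_scope.

Local Notation "A `_( i , j )" := (A (@inord 2 i) (@inord 2 j))
  (at level 3, format "A `_( i ,  j )").

Lemma det_mx33 (R : comPzRingType) (A : 'M[R]_3) :
  \det A = A`_(0, 0) * (A`_(1, 1) * A`_(2, 2) - A`_(1, 2) * A`_(2, 1))
         + A`_(0, 2) * (A`_(1, 0) * A`_(2, 1) - A`_(1, 1) * A`_(2, 0))
         - A`_(0, 1) * (A`_(1, 0) * A`_(2, 2) - A`_(1, 2) * A`_(2, 0)).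
Proof.
have eA : A = \matrix_(i, j) A`_(i, j) by apply/matrixP => i j; rewrite mxE !inord_val.
rewrite {1}eA.
rewrite (expand_det_row _ ord0) !big_ord_recr big_ord0 /cofactor /=.
rewrite !(expand_det_row _ ord0) !big_ord_recr !big_ord0 /cofactor /= !det_mx11 !mxE /=.
ring.
Qed.

Section Triples.
Variable F : fieldType.
Implicit Types (u v w : 'rV[F]_3) (L : 'M[F]_3).

Definition triple u v w : 'M[F]_3 := \matrix_(r < 3, j < 3) [:: u; v; w]`_r 0 j.

Lemma row_triple u v w (r : 'I_3) : row r (triple u v w) = [:: u; v; w]`_r.
Proof. by apply/rowP => j; rewrite !mxE. Qed.

Lemma triple_sub u v w L :
  (triple u v w <= L)%MS = [&& (u <= L)%MS, (v <= L)%MS & (w <= L)%MS].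
Proof.
apply/row_subP/and3P.
- move=> sub; split;
    [move: (sub ord0) | move: (sub (@Ordinal 3 1 isT)) | move: (sub (@Ordinal 3 2 isT))];
    by rewrite row_triple.
- by case=> uL vL wL [[|[|[|r]]] ltr3] //; rewrite row_triple.
Qed.

Lemma triple_rank3 u v w L : \det (triple u v w) != 0 ->
  (u <= L)%MS -> (v <= L)%MS -> (w <= L)%MS -> (3 <= \rank L)%N.
Proof.
move=> det_neq0 uL vL wL.
have sub : (triple u v w <= L)%MS by rewrite triple_sub uL vL wL.
by move: (mxrankS sub); rewrite mxrank_unit // unitmxE unitfE.
Qed.

Lemma triple_row_sub u v w (r : 'I_3) : ([:: u; v; w]`_r <= triple u v w)%MS.
Proof. by rewrite -row_triple row_sub. Qed.

Lemma triple_det0_sub u v w : \rank (u + v)%MS = 2%N ->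
  \det (triple u v w) = 0 -> (w <= u + v)%MS.
Proof.
move=> rank_uv det0.
have uvT : (u + v <= triple u v w)%MS.
  by rewrite addsmx_sub (triple_row_sub u v w ord0)
             (triple_row_sub u v w (@Ordinal 3 1 isT)).
have rankT : (\rank (triple u v w) <= 2)%N.
  have : ~~ row_free (triple u v w) by rewrite row_free_unit unitmxE unitfE det0 eqxx.
  by rewrite /row_free -ltnS ltn_neqAle => ->; rewrite rank_leq_row.
have TL : (triple u v w <= u + v)%MS.
  by rewrite -(mxrank_leqif_sup uvT).2 eqn_leq mxrankS // rank_uv rankT.
exact: submx_trans (triple_row_sub u v w (@Ordinal 3 2 isT)) TL.
Qed.
End Triples.

Section ArcFromVectors.
Variables (F : finFieldType) (n r : nat) (v : 'I_n -> 'rV[F]_3).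

Definition coll (a b c : 'I_n) : bool := \det (triple (v a) (v b) (v c)) == 0.

(* Any two distinct indices have a third point off their line; in particular
   v_a and v_b are independent. *)
Hypothesis spanning : forall a b, a != b -> exists c, ~~ coll a b c.
Hypothesis few_collinear : forall a b, a != b -> (#|[set c | coll a b c]| <= r)%N.
Hypothesis full_line : exists a b, a != b /\ #|[set c | coll a b c]| = r.

Definition point (k : 'I_n) : 'M[F]_3 := <<v k>>%MS.
Definition join (a b : 'I_n) : 'M[F]_3 := <<(v a + v b)%MS>>%MS.
Definition arc_set : {set 'M[F]_3} := point @: [set: 'I_n].

Lemma coll_refl a b : coll a b a.
Proof.
apply/eqP/(@determinant_alternate _ _ _ ord0 (@Ordinal 3 2 isT)) => // j.
by rewrite !mxE.
Qed.

(* Distinct indices span a plane of F^3: a third vector completes them to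
   a basis. *)
Lemma rank_join a b : a != b -> \rank (v a + v b)%MS = 2%N.
Proof.
move=> neq_ab; have [c /triple_rank3 rank3] := spanning neq_ab.
have S := addsmxSl (v a + v b)%MS (v c).
have := rank3 _ (submx_trans (addsmxSl _ _) S) (submx_trans (addsmxSr _ _) S)
  (addsmxSr _ _).
move: (mxrank_adds_leqif (v a + v b)%MS (v c)).1 (mxrank_adds_leqif (v a) (v b)).1.
move: (rank_leq_row (v a)) (rank_leq_row (v b)) (rank_leq_row (v c)).
lia.
Qed.

Lemma v_neq0 k : v k != 0.
Proof.
have [a [b [neq_ab _]]] := full_line.
have [l neq_kl] : exists l, k != l.
  by case: (eqVneq k a) => [->|]; [exists b | exists a].
apply/eqP => vk0; have := rank_join neq_kl.
by rewrite vk0 adds0mx; move: (rank_leq_row (v l)); lia.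
Qed.

Lemma point_sub k (L : 'M[F]_3) : (point k <= L)%MS = (v k <= L)%MS.
Proof. by rewrite genmxE. Qed.

Lemma point_inj : injective point.
Proof.
move=> a b eq_pt; apply/eqP/negPn/negP => neq_ab.
have sub : (v a + v b <= point a)%MS.
  by rewrite addsmx_sub -point_sub submx_refl eq_pt -point_sub submx_refl.
move: (mxrankS sub) (rank_join neq_ab) (rank_leq_row (v a)).
rewrite /point mxrank_gen; lia.
Qed.

Lemma point_pg k : pg_point (point k).
Proof. by rewrite /pg_point /point genmx_id eqxx mxrank_gen rank_rV v_neq0. Qed.

Lemma join_line a b : a != b -> pg_line (join a b).
Proof.
by move=> neq_ab; rewrite /pg_line /join genmx_id mxrank_gen rank_join // !eqxx.
Qed.

Lemma sub_join a b c : a != b -> (v c <= join a b)%MS = coll a b c.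
Proof.
move=> neq_ab; rewrite genmxE; apply/idP/idP => [sub | /eqP det0].
  apply/negPn/negP => ncoll.
  by have := triple_rank3 ncoll (addsmxSl _ _) (addsmxSr _ _) sub; rewrite rank_join.
exact: triple_det0_sub (rank_join neq_ab) det0.
Qed.

Lemma line_eq_join L a b : pg_line L -> a != b ->
  (v a <= L)%MS -> (v b <= L)%MS -> L = join a b.
Proof.
case/andP => /eqP rankL /eqP genL neq_ab aL bL.
have sub : (v a + v b <= L)%MS by rewrite addsmx_sub aL bL.
rewrite -genL /join; symmetry; apply/genmxP.
by rewrite -(mxrank_leqif_eq sub).2 rank_join // rankL.
Qed.

Definition on_arc (L : 'M[F]_3) : {set 'I_n} := [set k | (v k <= L)%MS].

Lemma card_on_line L : #|on_line arc_set L| = #|on_arc L|.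
Proof.
suff -> : on_line arc_set L = point @: on_arc L.
  by rewrite card_imset //; apply: point_inj.
apply/setP => P; rewrite inE; apply/andP/imsetP => [[/imsetP [k _ ->] kL] | [k]].
  by exists k; rewrite // inE -point_sub.
by rewrite inE => kL ->; split; [rewrite imset_f | rewrite point_sub].
Qed.

Lemma on_arc_join a b : a != b -> on_arc (join a b) = [set c | coll a b c].
Proof. by move=> neq_ab; apply/setP => c; rewrite !inE sub_join. Qed.

(* Every line meets the arc in at most r points: a line through two of its
   points is the join of these, and otherwise it has at most one point. *)
Lemma line_bound L : pg_line L -> (#|on_line arc_set L| <= r)%N.
Proof.
move=> lineL; rewrite card_on_line.
have [le1 | /card_gt1P [a [b [aL bL neq_ab]]]] := leqP #|on_arc L| 1.
  have [a [b [_ <-]]] := full_line.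
  by apply: leq_trans le1 _; apply/card_gt0P; exists a; rewrite inE coll_refl.
rewrite !inE in aL bL.
by rewrite (line_eq_join lineL neq_ab aL bL) on_arc_join // few_collinear.
Qed.

Lemma exists_full_line : exists L, pg_line L && (#|on_line arc_set L| == r).
Proof.
have [a [b [neq_ab card_r]]] := full_line.
by exists (join a b); rewrite join_line // card_on_line on_arc_join // card_r eqxx.
Qed.

Theorem vectors_arc : is_arc n r arc_set.
Proof.
apply/andP; split; last by rewrite card_imset ?cardsT ?card_ord //; exact: point_inj.
apply/and3P; split.
- by apply/forall_inP => _ /imsetP [k _ ->]; exact: point_pg.
- by apply/forallP => L; apply/implyP; exact: line_bound.
- exact/existsP/exists_full_line.
Qed.

End ArcFromVectors.

Local Close Scope ring_scope.

(* A model of GF(25) = GF(5)[i]/(i^2 - 2): the pair (a, b) of naturals stands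
   for a + b i, and all operations reduce their results modulo 5. *)
Definition gf25 := (nat * nat)%type.
Definition gadd (x y : gf25) : gf25 := ((x.1 + y.1) %% 5, (x.2 + y.2) %% 5).
Definition gopp (x : gf25) : gf25 := ((4 * x.1) %% 5, (4 * x.2) %% 5).
Definition gsub (x y : gf25) : gf25 := gadd x (gopp y).
Definition gmul (x y : gf25) : gf25 :=
  ((x.1 * y.1 + 2 * (x.2 * y.2)) %% 5, (x.1 * y.2 + x.2 * y.1) %% 5).
Definition gis0 (x : gf25) : bool := (x.1 %% 5 == 0) && (x.2 %% 5 == 0).

Definition decode (m : nat) : gf25 := (m %% 5, m %/ 5).
Definition arc_table : seq (seq nat) :=
  [:: [:: 0; 1; 1]; [:: 0; 1; 12]; [:: 0; 1; 17]; [:: 1; 0; 1]; [:: 1; 0; 12];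
      [:: 1; 0; 17]; [:: 1; 1; 1]; [:: 1; 1; 12]; [:: 1; 1; 17]; [:: 1; 2; 1];
      [:: 1; 2; 12]; [:: 1; 2; 17]; [:: 1; 3; 2]; [:: 1; 3; 9]; [:: 1; 3; 24];
      [:: 1; 4; 5]; [:: 1; 4; 11]; [:: 1; 4; 14]; [:: 1; 8; 10]; [:: 1; 8; 22];
      [:: 1; 8; 23]; [:: 1; 10; 2]; [:: 1; 10; 9]; [:: 1; 10; 24]; [:: 1; 15; 10];
      [:: 1; 15; 22]; [:: 1; 15; 23]; [:: 1; 16; 2]; [:: 1; 16; 9]; [:: 1; 16; 24];
      [:: 1; 22; 10]; [:: 1; 22; 22]; [:: 1; 22; 23]; [:: 1; 24; 7]; [:: 1; 24; 8];
      [:: 1; 24; 15]; [:: 1; 5; 0]; [:: 1; 14; 0]; [:: 1; 17; 0]].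
Definition coord (k j : nat) : gf25 := decode (nth 0 (nth [::] arc_table k) j).

(* The determinant of the points a, b, c of the table, computed in the model
   by the same expansion as det_mx33. *)
Definition gdet (a b c : nat) : gf25 :=
  let A i j := coord (nth 0 [:: a; b; c] i) j in
  gsub (gadd (gmul (A 0 0) (gsub (gmul (A 1 1) (A 2 2)) (gmul (A 1 2) (A 2 1))))
             (gmul (A 0 2) (gsub (gmul (A 1 0) (A 2 1)) (gmul (A 1 1) (A 2 0)))))
       (gmul (A 0 1) (gsub (gmul (A 1 0) (A 2 2)) (gmul (A 1 2) (A 2 0)))).
Definition gcoll (a b c : nat) : bool := gis0 (gdet a b c).

Definition pair_check (a b : nat) : bool :=
  (count (gcoll a b) (iota 0 39) <= 3) && has (fun c => ~~ gcoll a b c) (iota 0 39).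
Lemma pair_checks :
  all (fun a => all (fun b => (a == b) || pair_check a b) (iota 0 39)) (iota 0 39).
Proof. by vm_compute. Qed.
Lemma first_pair_full : count (gcoll 0 1) (iota 0 39) = 3.
Proof. by vm_compute. Qed.

(* 2 is not a square modulo 5: m^2 + 3 n^2 = m^2 - 2 n^2 = 0 (mod 5) forces
   m = n = 0 (mod 5). *)
Lemma sq_mod5 m n : (5 %| m ^ 2 + 3 * n ^ 2)%N -> (5 %| m)%N && (5 %| n)%N.
Proof.
rewrite /dvdn -modnDm -modnMmr -modnXm -[(n ^ 2) %% 5]modnXm modnMmr modnDm.
have := ltn_pmod m (isT : 0 < 5)%N; have := ltn_pmod n (isT : 0 < 5)%N.
by case: (n %% 5)%N => [|[|[|[|[|?]]]]]; case: (m %% 5)%N => [|[|[|[|[|?]]]]].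
Qed.

Local Open Scope ring_scope.

Section Embedding.
Variables (F : finFieldType) (hF : #|F| = 25%N).

Lemma char5 : (5 \in [pchar F])%N.
Proof. exact: (@card_finPcharP _ _ 2). Qed.

Lemma natr_eq0_5 m : (m%:R == 0 :> F) = (5 %| m)%N.
Proof. by rewrite (dvdn_pcharf char5). Qed.

Lemma natr_mod5 m : (m %% 5)%:R = m%:R :> F.
Proof. exact: (GRing.natr_mod_pchar char5). Qed.

(* 2 is a square in GF(25): X^2 - 2 divides X^25 - X = \prod_(a : F) (X - a),
   because 2^12 = 1 in characteristic 5. *)
Lemma exists_sqrt2 : exists x : F, x ^+ 2 = 2.
Proof.
have two12 : (2 : F) ^+ 12 = 1 by rewrite -natrX -natr_mod5.
have hdiv : ('X^2 - 2%:P : {poly F}) %| 'X^#|F| - 'X.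
  have -> : 'X^#|F| - 'X = 'X * (('X^2) ^+ 12 - (2%:P) ^+ 12) :> {poly F}.
    by rewrite hF -exprM -rmorphXn two12 mulrBr mulr1 -exprS.
  by rewrite dvdp_mull // subrXX dvdp_mulr.
rewrite finField_genPoly in hdiv.
have [m hm] := dvdp_prod_XsubC hdiv.
case: (mask m (index_enum F)) hm => [|x s] hm.
  by move: hm; rewrite big_nil => /eqp_size; rewrite size_poly1 size_XnsubC.
exists x.
have : root (\prod_(y <- x :: s) ('X - y%:P)) x.
  by rewrite big_cons rootM root_XsubC eqxx.
by rewrite -(eqp_root hm) /root !hornerE subr_eq0 => /eqP.
Qed.

Variables (i : F) (hi : i ^+ 2 = 2).

Definition emb (x : gf25) : F := x.1%:R + x.2%:R * i.

Lemma emb_add x y : emb (gadd x y) = emb x + emb y.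
Proof. by rewrite /emb /= !natr_mod5 !natrD; ring. Qed.

Lemma emb_opp x : emb (gopp x) = - emb x.
Proof.
have four : 4%:R = - 1 :> F.
  by apply/eqP; rewrite -subr_eq0 opprK -(natrD _ 4 1) natr_eq0_5.
by rewrite /emb /= !natr_mod5 !natrM four; ring.
Qed.

Lemma emb_sub x y : emb (gsub x y) = emb x - emb y.
Proof. by rewrite emb_add emb_opp. Qed.

Lemma emb_mul x y : emb (gmul x y) = emb x * emb y.
Proof.
rewrite /emb /= !natr_mod5 !natrD !natrM.
transitivity (x.1%:R * y.1%:R + x.2%:R * y.2%:R * i ^+ 2
              + (x.1%:R * y.2%:R + x.2%:R * y.1%:R) * i : F); last by ring.
by rewrite hi; ring.
Qed.

(* emb vanishes only on the zero residue, since 2 is not a square mod 5: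
   from a + b i = 0 we get a^2 + 3 b^2 = b^2 (i^2 + 3) = 5 b^2 = 0. *)
Lemma emb_eq0 x : (emb x == 0) = gis0 x.
Proof.
change (emb x == 0) with (x.1%:R + x.2%:R * i == 0 :> F).
change (gis0 x) with ((5 %| x.1)%N && (5 %| x.2)%N).
apply/idP/andP => [| [d1 d2]]; last first.
  by rewrite -!natr_eq0_5 in d1 d2; rewrite (eqP d1) (eqP d2) mul0r addr0.
rewrite addr_eq0 => /eqP ea; apply/andP/sq_mod5; rewrite -natr_eq0_5.
have -> : (x.1 ^ 2 + 3 * x.2 ^ 2)%:R = x.2%:R ^+ 2 * (i ^+ 2 + 3) :> F.
  by rewrite natrD natrM !natrX ea; ring.
by rewrite hi -(natrD _ 2 3) mulf_eq0 natr_eq0_5 orbT.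
Qed.

Definition vec (k : nat) : 'rV[F]_3 := \row_j emb (coord k j).

Lemma coll_vec a b c : (\det (triple (vec a) (vec b) (vec c)) == 0) = gcoll a b c.
Proof.
rewrite det_mx33 !mxE !inordK //= !mxE !inordK // /gcoll -emb_eq0.
by rewrite /gdet !(emb_sub, emb_add, emb_mul).
Qed.

End Embedding.

Section TableArc.
Variables (F : finFieldType) (hF : #|F| = 25%N) (i : F) (hi : i ^+ 2 = 2).

Definition table_vec (k : 'I_39) : 'rV[F]_3 := vec i k.

Lemma table_coll (a b c : 'I_39) : coll table_vec a b c = gcoll a b c.
Proof. exact: coll_vec. Qed.

Lemma card_table_coll (a b : 'I_39) :
  #|[set c | coll table_vec a b c]| = count (gcoll a b) (iota 0 39).
Proof.
rewrite cardsE cardE /enum_mem size_filter -enumT -val_enum_ord count_map.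
by apply: eq_count => c; rewrite /= -table_coll.
Qed.

Lemma table_pair_check (a b : 'I_39) : a != b -> pair_check a b.
Proof.
move=> neq_ab; move/allP/(_ a): pair_checks; rewrite mem_iota ltn_ord => /(_ isT).
move/allP/(_ b); rewrite mem_iota ltn_ord => /(_ isT).
by rewrite (inj_eq val_inj) (negbTE neq_ab).
Qed.

Lemma table_spanning a b : a != b -> exists c, ~~ coll table_vec a b c.
Proof.
case/table_pair_check/andP => _ /hasP [c]; rewrite mem_iota => /andP [_ ltc] ncoll.
by exists (Ordinal ltc); rewrite table_coll.
Qed.

Lemma table_few a b : a != b -> (#|[set c | coll table_vec a b c]| <= 3)%N.
Proof. by rewrite card_table_coll => /table_pair_check/andP []. Qed.

Lemma table_full : exists a b, a != b /\ #|[set c | coll table_vec a b c]| = 3%N.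
Proof.
exists (@Ordinal 39 0 isT), (@Ordinal 39 1 isT).
by rewrite card_table_coll first_pair_full.
Qed.

End TableArc.

Local Close Scope ring_scope.

Theorem mainTheorem11 (F : finFieldType) (hF : #|F| = 25) :
  (exists B : {set 'M[F]_3}, is_arc 39 3 B) /\ (39 <= m_r F 3)%N.
Proof.
have [i hi] := exists_sqrt2 hF.
have arc := vectors_arc (table_spanning hF hi) (table_few hF hi) (table_full hF hi).
split; first by exists (arc_set (table_vec i)).
by case/andP: arc => arc3 /eqP <-; exact: leq_bigmax_cond.
Qed.
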